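(* Assume $\widetilde p_i\propto i^{-\beta}$ for a constant $\beta>1$, $M=\omega_K(1)$, and total training time $T\eqsim M^\beta$. Let $\alpha\in(0,1)$ and run TRA-SignGD from $\mathbf{W}_0=\mathbf{0}$ with learning rate $\eta=\Theta\big(\tfrac{\log K}{T}\big)$. Then $$\mathcal{L}^{\mathrm{TRA\text{-}SignGD}}(T)-\mathcal{L}^*\lesssim\Big(\frac{\log K}{T}\Big)^2.$$
   Context: Setup: $K=MC$ items in $M$ groups of $C$ items; $\widetilde p_1>\dots>\widetilde p_M>0$, $\sum_i\widetilde p_i=1$, $p_j=\widetilde p_i/C$ for $j$ in group $i$ (indices $(i-1)C+1,\dots,iC$). $\mathbf{E},\widetilde{\mathbf{E}}\in\mathbb{R}^{K\times K}$ are orthogonal with columns $\mathbf{E}_j,\widetilde{\mathbf{E}}_j$. Noise: $p_{i\mid j}=1-\alpha+\alpha/K$ if $i=j$, $\alpha/K$ otherwise. $\widehat p_{i\mid j}(\mathbf{W})=\exp(\widetilde{\mathbf{E}}_i^\top\mathbf{W}\mathbf{E}_j)/\sum_k\exp(\widetilde{\mathbf{E}}_k^\top\mathbf{W}\mathbf{E}_j)$; $\mathcal{L}(\mathbf{W})=-\sum_jp_j\sum_ip_{i\mid j}\log\widehat p_{i\mid j}(\mathbf{W})$, with minimal value $\mathcal{L}^*=-\big(1-\alpha+\tfrac{\alpha}{K}\big)\log\big(1-\alpha+\tfrac{\alpha}{K}\big)-\tfrac{\alpha(K-1)}{K}\log\tfrac{\alpha}{K}$. TRA-SignGD: $\mathbf{W}_{t+1}=\mathbf{W}_t-\eta\,\widetilde{\mathbf{E}}\,\mathrm{sgn}\big(\widetilde{\mathbf{E}}^\top\nabla\mathcal{L}(\mathbf{W}_t)\mathbf{E}\big)\mathbf{E}^\top$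 with entrywise $\mathrm{sgn}$; $\mathcal{L}^{\mathrm{TRA\text{-}SignGD}}(T)=\mathcal{L}(\mathbf{W}_T)$. Regime $K\gg1$, $M\ll C$; $\omega_K(1)\to\infty$ as $K\to\infty$; $\eqsim,\lesssim,\Theta$ hide constant factors. *)

From HB Require Import structures.
From mathcomp Require Import all_boot all_order all_algebra.
From mathcomp Require Import all_classical all_reals all_analysis.
Unset Printing Implicit Defensive.
Import Order.TTheory GRing.Theory Num.Theory.
Local Open Scope ring_scope.

(* Items are indexed by 'I_(M*C); item j (0-based) lies in group j %/ C
   (0-based), i.e. group i = (j %/ C).+1 in the paper's 1-based convention. *)

Definition ptil (R : realType) (M : nat) (beta : R) (g : nat) : R :=
  (g.+1)%:R `^ (- beta) / \sum_(k < M) (k.+1)%:R `^ (- beta).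

Definition pitem (R : realType) (M C : nat) (beta : R) (j : 'I_(M * C)) : R :=
  ptil R M beta (j %/ C) / C%:R.

Definition pcond (R : realType) (K : nat) (alpha : R) (i j : 'I_K) : R :=
  if i == j then 1 - alpha + alpha / K%:R else alpha / K%:R.

Definition orthogonal_mx (R : realType) (K : nat) (E : 'M[R]_K) : Prop :=
  E^T *m E = 1%:M /\ E *m E^T = 1%:M.

Definition phat (R : realType) (K : nat) (E Et W : 'M[R]_K) (i j : 'I_K) : R :=
  expR ((Et^T *m W *m E) i j) / \sum_(k < K) expR ((Et^T *m W *m E) k j).

Definition loss (R : realType) (M C : nat) (beta alpha : R)
  (E Et W : 'M[R]_(M * C)) : R :=
  - \sum_(j < M * C) pitem R M C beta j *
      \sum_(i < M * C) pcond R (M * C) alpha i j * ln (phat R (M * C) E Et W i j).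

Definition loss_star (R : realType) (K : nat) (alpha : R) : R :=
  - (1 - alpha + alpha / K%:R) * ln (1 - alpha + alpha / K%:R)
  - alpha * (K%:R - 1) / K%:R * ln (alpha / K%:R).

Definition grad_loss (R : realType) (M C : nat) (beta alpha : R)
  (E Et W : 'M[R]_(M * C)) : 'M[R]_(M * C) :=
  \matrix_(a, b)
     derive1 (fun h : R => loss R M C beta alpha E Et (W + h *: delta_mx a b)) 0.

Definition tra_signgd_step (R : realType) (M C : nat) (beta alpha eta : R)
  (E Et W : 'M[R]_(M * C)) : 'M[R]_(M * C) :=
  W - eta *: (Et *m map_mx Num.sg (Et^T *m grad_loss R M C beta alpha E Et W *m E)
                *m E^T).

Definition tra_signgd_iter (R : realType) (M C : nat) (beta alpha eta : R)
  (E Et : 'M[R]_(M * C)) (T : nat) : 'M[R]_(M * C) :=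
  iter T (tra_signgd_step R M C beta alpha eta E Et) 0.

Definition loss_tra_signgd (R : realType) (M C : nat) (beta alpha eta : R)
  (E Et : 'M[R]_(M * C)) (T : nat) : R :=
  loss R M C beta alpha E Et (tra_signgd_iter R M C beta alpha eta E Et T).

(* In the rotated coordinates V = Et^T W E the loss is the cross entropy of the
   column softmaxes of V and its gradient is Et G E^T with
   G_ij = p_j (softmax(V)_ij - p_(i|j)), so a TRA-SignGD step reads
   V <- V - eta sgn G(V).  Starting from V = 0, V stays two-level (y on the
   diagonal, z off it) and sgn G(V) is two-level with entries +-sgn(y - z - g),
   where g = ln (q / a) is the optimal logit gap for the noise levels
   q = p_(j|j) and a = p_(i|j).  Hence d = y - z - g performs the scalar sign
   descent d <- d - 2 eta sgn d from d_0 = -g; since g <= 2 ln K <= 2 eta T,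
   after T steps |d| <= 2 eta.  The excess loss of a two-level V is a KL
   divergence, at most 2 d^2. *)

From HB Require Import structures.
From mathcomp Require Import all_boot all_order all_algebra.
From mathcomp Require Import all_classical all_reals all_analysis.
From mathcomp Require Import lra ring zify.
Import Order.TTheory GRing.Theory Num.Theory.
Local Open Scope ring_scope.

Set Implicit Arguments.
Unset Strict Implicit.

Section LineDerivatives.
Variable R : realType.
Implicit Types (x k : R) (f : R -> R).

Lemma is_derive_sum_fun n (F : 'I_n -> R -> R) (dF : 'I_n -> R) x :
  (forall i, is_derive x 1 (F i) (dF i)) ->
  is_derive x 1 (fun h => \sum_(i < n) F i h) (\sum_(i < n) dF i).
Proof. by move=> dFi; rewrite -fct_sumE; exact: is_derive_sum. Qed.

Lemma is_derive_mull_fun k f d x :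
  is_derive x 1 f d -> is_derive x 1 (fun h => k * f h) (k * d).
Proof.
by move=> df; rewrite [X in is_derive _ _ X](_ : _ = k *: f) //; exact: is_deriveZ.
Qed.

Lemma is_derive_sub_fun f g d e x :
  is_derive x 1 f d -> is_derive x 1 g e ->
  is_derive x 1 (fun h => f h - g h) (d - e).
Proof.
by move=> df dg; rewrite [X in is_derive _ _ X](_ : _ = f - g) //; exact: is_deriveB.
Qed.

Lemma is_derive_affine v c x : is_derive x 1 (fun h : R => v + h * c) c.
Proof.
rewrite [X in is_derive _ _ X](_ : _ = cst v + c \*: id); last first.
  by apply/funext => h /=; rewrite mulrC.
by apply: is_derive_eq; rewrite add0r /GRing.scale /= mulr1.
Qed.

Lemma is_derive_lse n (v c : 'I_n -> R) x : (0 < n)%N ->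
  is_derive x 1 (fun h => ln (\sum_(k < n) expR (v k + h * c k)))
    ((\sum_(k < n) expR (v k + x * c k) * c k) / \sum_(k < n) expR (v k + x * c k)).
Proof.
case: n v c => // n v c _.
have S0 : 0 < \sum_(k < n.+1) expR (v k + x * c k).
  by rewrite big_ord_recl ltr_pwDl ?expR_gt0 // sumr_ge0 // => k _; rewrite expR_ge0.
rewrite mulrC.
apply: (is_derive1_comp (g := fun h => \sum_(k < n.+1) expR (v k + h * c k))
  (is_derive1_ln S0)).
apply: is_derive_sum_fun => k.
exact: (is_derive1_comp (is_derive_expR _) (is_derive_affine _ _ _)).
Qed.

End LineDerivatives.

Section CrossEntropy.
Variables (R : realType) (n : nat).
Implicit Types (V D : 'M[R]_n) (p : 'I_n -> R) (pc : 'I_n -> 'I_n -> R).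

Definition softmax V i j : R := expR (V i j) / \sum_(k < n) expR (V k j).

Definition xent p pc V : R :=
  - \sum_(j < n) p j * \sum_(i < n) pc i j * ln (softmax V i j).

Definition xent_grad p pc V : 'M[R]_n :=
  \matrix_(i, j) (p j * (softmax V i j - pc i j)).

Lemma sum_expR_col_gt0 V j : 0 < \sum_(k < n) expR (V k j).
Proof.
by rewrite (bigD1 j) //= ltr_pwDl ?expR_gt0 // sumr_ge0 // => k _; rewrite expR_ge0.
Qed.

Lemma ln_softmax V i j : ln (softmax V i j) = V i j - ln (\sum_(k < n) expR (V k j)).
Proof. by rewrite ln_div ?expRK // posrE ?expR_gt0 ?sum_expR_col_gt0. Qed.

Lemma derive1_xent_line p pc V D : (forall j, \sum_i pc i j = 1) ->
  derive1 (fun h => xent p pc (V + h *: D)) 0 =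
  \sum_(i < n) \sum_(j < n) xent_grad p pc V i j * D i j.
Proof.
move=> pc1.
pose lse j h := ln (\sum_(k < n) expR (V k j + h * D k j)).
have -> : (fun h => xent p pc (V + h *: D)) =
    fun h => \sum_(j < n) p j * \sum_(i < n) pc i j * (lse j h - (V i j + h * D i j)).
  apply/funext => h; rewrite /xent -sumrN; apply: eq_bigr => j _.
  rewrite -mulrN -sumrN; congr (_ * _); apply: eq_bigr => i _.
  rewrite -mulrN ln_softmax opprB /lse !mxE.
  by under [X in ln X]eq_bigr do rewrite !mxE.
have j0 (j : 'I_n) : (0 < n)%N by case: n j => [[]|].
have dF := is_derive_sum_fun (fun j => is_derive_mull_fun (p j)
  (is_derive_sum_fun (fun i => is_derive_mull_fun (pc i j) (is_derive_sub_fun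
     (is_derive_lse (fun k => V k j) (fun k => D k j) 0 (j0 j))
     (is_derive_affine (V i j) (D i j) 0))))).
rewrite derive1E (@derive_val _ _ _ _ _ _ _ dF).
rewrite exchange_big; apply: eq_bigr => j _.
under [X in p j * X]eq_bigr => i _ do rewrite mulrBr.
rewrite sumrB -mulr_suml pc1 mul1r.
under [X in _ * (X / _ - _)]eq_bigr => k _ do rewrite mul0r addr0.
under [X in _ * (_ / X - _)]eq_bigr => k _ do rewrite mul0r addr0.
rewrite [RHS](_ : _ = p j * (\sum_i softmax V i j * D i j - \sum_i pc i j * D i j)).
  by rewrite mulr_suml; congr (_ * (_ - _)); apply: eq_bigr => i _; rewrite /softmax; ring.
by rewrite -sumrB mulr_sumr; apply: eq_bigr => i _; rewrite mxE; ring.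
Qed.

End CrossEntropy.

Lemma sum_if_eq (V : nmodType) n (j : 'I_n) (y z : V) :
  \sum_(k < n) (if k == j then y else z) = y + z *+ n.-1.
Proof.
rewrite (bigD1 j) //= eqxx; congr (_ + _).
rewrite (eq_bigr (fun _ => z)) => [|k /negbTE -> //].
by rewrite sumr_const cardC1 card_ord.
Qed.

Lemma mulmx_delta_mxE (R : pzRingType) m n p q (A : 'M[R]_(m, n)) (B : 'M[R]_(p, q))
    a b i j :
  (A *m delta_mx a b *m B) i j = A i a * B b j.
Proof.
by rewrite -(mul_delta_mx (0 : 'I_1)) mulmxA -colE -mulmxA -rowE mxE big_ord1 !mxE.
Qed.

Lemma sum_pcond (R : realType) n alpha (j : 'I_n) : \sum_i pcond R n alpha i j = 1.
Proof.
rewrite (eq_bigr (fun i => if i == j then 1 - alpha + alpha / n%:R else alpha / n%:R)) //.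
have n0 : (0 < n)%N by case: n j => [[]|].
rewrite sum_if_eq -addrA -mulrS prednK // -[alpha / _ *+ _]mulr_natr.
by rewrite divfK ?subrK // pnatr_eq0 -lt0n.
Qed.

Section TransformedCoordinates.
Variables (R : realType) (M C : nat) (beta alpha eta : R) (E Et : 'M[R]_(M * C)).
Hypotheses (oE : orthogonal_mx R (M * C) E) (oEt : orthogonal_mx R (M * C) Et).

Local Notation p := (pitem R M C beta).
Local Notation pc := (pcond R (M * C) alpha).

Lemma loss_xentE W : loss R M C beta alpha E Et W = xent p pc (Et^T *m W *m E).
Proof. by []. Qed.

Lemma grad_lossE W :
  grad_loss R M C beta alpha E Et W = Et *m xent_grad p pc (Et^T *m W *m E) *m E^T.
Proof.
apply/matrixP => a b; rewrite mxE.
under eq_fun => h do rewrite loss_xentE mulmxDr mulmxDl -scalemxAr -scalemxAl.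
rewrite derive1_xent_line => [|j]; last exact: sum_pcond.
rewrite mxE exchange_big; apply: eq_bigr => j _.
rewrite !mxE mulr_suml; apply: eq_bigr => i _.
by rewrite mulmx_delta_mxE !mxE; ring.
Qed.

Lemma orthogonal_conjK (G : 'M[R]_(M * C)) : Et^T *m (Et *m G *m E^T) *m E = G.
Proof.
have [EtE _] := oE; have [EtEt _] := oEt.
by rewrite !mulmxA EtEt mul1mx -mulmxA EtE mulmx1.
Qed.

Lemma tra_signgd_stepE W :
  Et^T *m tra_signgd_step R M C beta alpha eta E Et W *m E =
  Et^T *m W *m E - eta *: map_mx Num.sg (xent_grad p pc (Et^T *m W *m E)).
Proof.
by rewrite mulmxBr mulmxBl -scalemxAr -scalemxAl grad_lossE !orthogonal_conjK.
Qed.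

End TransformedCoordinates.

Section ScalarBounds.
Variable R : realType.
Implicit Types (q d u v w c x : R).

Lemma ln_le_subr1 x : 0 < x -> ln x <= x - 1.
Proof. by move=> x0; have := @le_ln1Dx R (x - 1); rewrite addrCA subrr addr0; apply; lra. Qed.

Lemma ln_mix_le q u v w : 0 <= q <= 1 -> 0 < u <= expR w -> 0 < v <= expR w ->
  ln (q * u + (1 - q) * v) <= w.
Proof.
move=> /andP[q0 q1] /andP[u0 uw] /andP[v0 vw].
rewrite -[w in _ <= w]expRK ler_ln ?posrE ?expR_gt0 //; nra.
Qed.

Lemma sgr_expRB u v : Num.sg (expR u - expR v) = Num.sg (u - v).
Proof.
case: (ltgtP u v) => [uv|uv|->]; last by rewrite !subrr.
  by rewrite !ltr0_sg // subr_lt0 // ltr_expR.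
by rewrite !gtr0_sg // subr_gt0 // ltr_expR.
Qed.

Definition kl_gap q d : R :=
  q * ln (q + (1 - q) * expR (- d)) + (1 - q) * ln (q * expR d + (1 - q)).

Lemma kl_gap_le_cosh q d : 0 < q < 1 ->
  kl_gap q d <= q * (1 - q) * (expR d + expR (- d) - 2).
Proof.
move=> /andP[q0 q1]; have ed := expR_gt0 d; have emd := expR_gt0 (- d).
have l1 := ln_le_subr1 (x := q + (1 - q) * expR (- d)) ltac:(nra).
have l2 := ln_le_subr1 (x := q * expR d + (1 - q)) ltac:(nra).
rewrite /kl_gap; nra.
Qed.

Lemma kl_gap_le_abs q d : 0 < q < 1 -> kl_gap q d <= `|d|.
Proof.
move=> /andP[q0 q1]; have q01 : 0 <= q <= 1 by rewrite !ltW.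
have e1 : (0 : R) < 1 <= expR `|d|.
  by rewrite ltr01 /= -[X in X <= _]expR0 ler_expR.
have emd : 0 < expR (- d) <= expR `|d| by rewrite expR_gt0 ler_expR ler_normr lexx orbT.
have ed : 0 < expR d <= expR `|d| by rewrite expR_gt0 ler_expR ler_norm.
have l1 := ln_mix_le q01 e1 emd.
have l2 := ln_mix_le q01 ed e1.
rewrite !mulr1 in l1 l2; rewrite /kl_gap; nra.
Qed.

Lemma expR_le_quadratic d : d <= 1/2 -> expR d <= 1 + d + 2 * d ^+ 2.
Proof.
move=> d_le; have emd := expR_ge1Dx (- d); have ed := expR_gt0 d.
have : expR d * expR (- d) = 1 by rewrite -expRD subrr expR0.
rewrite expr2; nra.
Qed.

Lemma kl_gap_le_sqr q d : 0 < q < 1 -> kl_gap q d <= 2 * d ^+ 2.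
Proof.
move=> q01; have [d_small|d_big] := lerP `|d| (1/2).
  have /andP[q0 q1] := q01; move: d_small; rewrite ler_norml => /andP[d1 d2].
  have h1 := expR_le_quadratic d2.
  have h2 := @expR_le_quadratic (- d) ltac:(lra).
  have cosh_le : expR d + expR (- d) - 2 <= 4 * d ^+ 2.
    by rewrite sqrrN in h2; rewrite expr2 in h1 h2 *; lra.
  have qq : 0 <= q * (1 - q) <= 1/4.
    by have := sqr_ge0 (q - 1/2); rewrite expr2 => ?; apply/andP; split; nra.
  have := kl_gap_le_cosh d q01; move: qq cosh_le; set y := q * (1 - q).
  rewrite expr2; nra.
apply: le_trans (kl_gap_le_abs d q01) _.
by rewrite -real_normK ?num_real // expr2; nra.
Qed.

Lemma kl_gap_le_of_abs q d c : 0 < q < 1 -> `|d| <= c -> kl_gap q d <= 2 * c ^+ 2.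
Proof.
move=> q01 dc; apply: le_trans (kl_gap_le_sqr d q01) _.
have d0 := normr_ge0 d; rewrite -real_normK ?num_real // !expr2; nra.
Qed.

Definition sign_step c x : R := x - c * Num.sg x.

Lemma sign_step_abs c x : 0 <= c -> `|sign_step c x| <= Num.max (`|x| - c) c.
Proof.
move=> c0; rewrite /sign_step le_max; apply/orP.
have [s0|s0] := lerP 0 (x - c * Num.sg x);
  rewrite ?(ger0_norm s0) ?(ltr0_norm s0); move: s0.
all: case: (ltgtP x 0) => [x0|x0|->]; [rewrite (ltr0_sg x0) (ltr0_norm x0)
  | rewrite (gtr0_sg x0) (gtr0_norm x0) | rewrite sgr0 normr0]; lra.
Qed.

Lemma iter_sign_step_abs c x t : 0 <= c ->
  `|iter t (sign_step c) x| <= Num.max (`|x| - c * t%:R) c.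
Proof.
move=> c0; elim: t => [|t IH]; first by rewrite mulr0 subr0 le_max lexx.
apply: le_trans (sign_step_abs _ c0) _.
move: IH; rewrite ge_max !le_max -addn1 natrD mulrDr mulr1 => /orP IH.
by apply/andP; split; apply/orP; lra.
Qed.

Lemma iter_sign_step_le c x T : 0 <= c -> `|x| <= c * T%:R ->
  `|iter T (sign_step c) x| <= c.
Proof.
move=> c0 xT; apply: le_trans (iter_sign_step_abs _ _ c0) _.
by rewrite ge_max lexx andbT; lra.
Qed.

End ScalarBounds.

Definition two_level_mx (R : pzRingType) n (y z : R) : 'M[R]_n :=
  \matrix_(i, j) (if i == j then y else z).

Lemma two_level_mx_step (R : comPzRingType) n (y z e s : R) :
  two_level_mx n y z - e *: two_level_mx n s (- s) = two_level_mx n (y - e * s) (z + e * s).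
Proof. by apply/matrixP => i j; rewrite !mxE; case: eqP => _; rewrite ?mulrN ?opprK. Qed.

Section TwoLevelNoise.
Variables (R : realType) (n : nat) (alpha : R).
Hypotheses (n_gt1 : (1 < n)%N) (alpha01 : 0 < alpha < 1).

Definition noise_diag : R := 1 - alpha + alpha / n%:R.
Definition noise_off : R := alpha / n%:R.
Definition opt_gap : R := ln (noise_diag / noise_off).

Local Notation q := noise_diag.
Local Notation a := noise_off.
Local Notation m := (n.-1%:R : R).

Let n_gt0 : 0 < n%:R :> R.
Proof. by rewrite ltr0n; lia. Qed.

Let off_count_gt0 : 0 < m.
Proof. by rewrite ltr0n; lia. Qed.

Lemma noise_off_gt0 : 0 < a.
Proof. by case/andP: alpha01 => al0 _; rewrite divr_gt0 ?n_gt0. Qed.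

Let n_predE : n%:R = m + 1 :> R.
Proof. by rewrite natr1 prednK // ltnW. Qed.

Lemma noise_diag_complE : 1 - q = a * m.
Proof.
rewrite /noise_diag /noise_off n_predE; have := off_count_gt0.
by move=> m0; field; rewrite gt_eqF //; lra.
Qed.

Lemma noise_diag_gt_off : a < q.
Proof.
case/andP: alpha01 => _ al1; rewrite /noise_diag -/noise_off; have := noise_off_gt0; lra.
Qed.

Lemma noise_diag_bounds : 0 < q < 1.
Proof.
have qE := noise_diag_complE; have a0 := noise_off_gt0; have m0 := off_count_gt0.
have qa := noise_diag_gt_off; apply/andP; split; nra.
Qed.

Lemma loss_star_noise : loss_star R n alpha = - (q * ln q) - (1 - q) * ln a.
Proof.
rewrite /loss_star -/q -/a; congr (_ - _); first by rewrite mulNr.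
rewrite noise_diag_complE.
rewrite /noise_off n_predE addrK; congr (_ * _).
by have := off_count_gt0 => m0; field; rewrite gt_eqF //; lra.
Qed.

Lemma softmax_two_level y z i j :
  softmax (two_level_mx n y z) i j =
  (if i == j then expR (y - z) else 1) / (expR (y - z) + m).
Proof.
have ez := expR_gt0 z; have m0 := off_count_gt0.
rewrite /softmax (eq_bigr (fun k => if k == j then expR y else expR z)); last first.
  by move=> k _; rewrite mxE (fun_if expR).
rewrite sum_if_eq -mulr_natr mxE (fun_if expR) expRB.
have ey := expR_gt0 y.
by case: eqP => _; field; rewrite gt_eqF //; nra.
Qed.

Lemma expR_opt_gap : expR opt_gap = q / a.
Proof.
by rewrite lnK // posrE divr_gt0 ?noise_off_gt0 //; case/andP: noise_diag_bounds.
Qed.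

Lemma softmax_diag_subE s :
  expR s / (expR s + m) - q = a * m / (expR s + m) * (expR s - expR opt_gap).
Proof.
have m0 := off_count_gt0; have es := expR_gt0 s; have a0 := noise_off_gt0.
rewrite expR_opt_gap; have -> : q = 1 - a * m by have := noise_diag_complE; lra.
by field; rewrite !gt_eqF //; lra.
Qed.

Lemma sg_xent_grad_two_level (p : 'I_n -> R) y z : (forall j, 0 < p j) ->
  map_mx Num.sg (xent_grad p (pcond R n alpha) (two_level_mx n y z)) =
  two_level_mx n (Num.sg (y - z - opt_gap)) (- Num.sg (y - z - opt_gap)).
Proof.
move=> p_gt0; apply/matrixP => i j.
rewrite !mxE softmax_two_level /pcond -/q -/a sgrM gtr0_sg ?mul1r //.
set s := y - z; have m0 := off_count_gt0; have es := expR_gt0 s.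
have sg_diag : Num.sg (expR s / (expR s + m) - q) = Num.sg (s - opt_gap).
  rewrite softmax_diag_subE sgrM gtr0_sg ?mul1r ?sgr_expRB //.
  by apply: divr_gt0; [exact: mulr_gt0 noise_off_gt0 m0 | lra].
have off_diag : 1 / (expR s + m) - a = - (expR s / (expR s + m) - q) / m.
  have -> : q = 1 - a * m by have := noise_diag_complE; lra.
  by field; rewrite !gt_eqF //; lra.
case: eqP => _; first exact: sg_diag.
by rewrite off_diag sgrM sgrN sg_diag [Num.sg m^-1]gtr0_sg ?invr_gt0 // mulr1.
Qed.

Lemma xent_two_level_gap (p : 'I_n -> R) y z : \sum_j p j = 1 ->
  xent p (pcond R n alpha) (two_level_mx n y z) - loss_star R n alpha =
  kl_gap q (y - z - opt_gap).
Proof.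
move=> p1; set s := y - z.
have m0 := off_count_gt0; have es := expR_gt0 s; have a0 := noise_off_gt0.
have /andP[q0 q1] := noise_diag_bounds.
have qE := noise_diag_complE.
set P := expR s / (expR s + m); set Q := 1 / (expR s + m).
have col j : \sum_i pcond R n alpha i j * ln (softmax (two_level_mx n y z) i j) =
    q * ln P + (1 - q) * ln Q.
  rewrite (eq_bigr (fun i => if i == j then q * ln P else a * ln Q)); last first.
    by move=> i _; rewrite softmax_two_level /pcond; case: eqP.
  by rewrite sum_if_eq -mulr_natr qE; ring.
have -> : xent p (pcond R n alpha) (two_level_mx n y z) = - (q * ln P + (1 - q) * ln Q).
  by rewrite /xent; under eq_bigr do rewrite col; rewrite -mulr_suml p1 mul1r.
have diag_ratio : q / P = q + (1 - q) * expR (- (s - opt_gap)).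
  rewrite opprB expRB expR_opt_gap qE /P; field; rewrite !gt_eqF //; lra.
have off_ratio : a / Q = q * expR (s - opt_gap) + (1 - q).
  rewrite expRB expR_opt_gap qE /Q; field; rewrite !gt_eqF //; lra.
have P0 : 0 < P by rewrite divr_gt0 //; lra.
have Q0 : 0 < Q by rewrite divr_gt0 //; lra.
rewrite loss_star_noise /kl_gap -diag_ratio -off_ratio.
by rewrite [ln (q / P)]ln_div ?[ln (a / Q)]ln_div ?posrE //; ring.
Qed.

Lemma opt_gap_ge0 : 0 <= opt_gap.
Proof.
by rewrite ln_ge0 // ler_pdivlMr ?noise_off_gt0 // mul1r ltW ?noise_diag_gt_off.
Qed.

Lemma opt_gap_le_ln : 1 <= alpha * n%:R -> opt_gap <= 2 * ln n%:R.
Proof.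
move=> alphan; have n0 := n_gt0; have a0 := noise_off_gt0.
case/andP: alpha01 => al0 _.
have /andP[q0 q1] := noise_diag_bounds.
have -> : 2 * ln n%:R = ln (n%:R ^+ 2) :> R by rewrite lnXn // mulr2n; ring.
rewrite ler_ln ?posrE ?divr_gt0 ?exprn_gt0 //.
rewrite ler_pdivrMr // /noise_off.
have -> : n%:R ^+ 2 * (alpha / n%:R) = alpha * n%:R by field; rewrite gt_eqF.
lra.
Qed.

End TwoLevelNoise.

Lemma sum_divn_blocks (V : nmodType) (f : nat -> V) M C : (0 < C)%N ->
  \sum_(j < M * C) f (j %/ C)%N = (\sum_(g < M) f g) *+ C.
Proof.
move=> C0; rewrite -(big_mkord xpredT (fun j => f (j %/ C)%N)).
elim: M => [|M IH]; first by rewrite mul0n big_geq // big_ord0 mul0rn.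
rewrite mulSnr (big_cat_nat _ (leq_addr _ _)) //= IH big_ord_recr /= mulrnDl.
congr (_ + _); rewrite -{1}[(M * C)%N]add0n big_addn addKn.
rewrite (eq_big_nat _ _ (F2 := fun => f M)) ?sumr_const_nat ?subn0 // => i /andP[_ iC].
by rewrite addnC divnMDl // divn_small ?addn0.
Qed.

Section ItemDistribution.
Variables (R : realType) (M C : nat) (beta : R).
Hypotheses (M_gt0 : (0 < M)%N) (C_gt0 : (0 < C)%N).

Lemma ptil_normalizer_gt0 : 0 < \sum_(k < M) (k.+1)%:R `^ (- beta) :> R.
Proof.
case: M M_gt0 => // M' _; rewrite big_ord_recl ltr_pwDl ?powR_gt0 //.
by rewrite sumr_ge0 // => i _; exact: powR_ge0.
Qed.

Lemma pitem_gt0 j : 0 < pitem R M C beta j.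
Proof.
by rewrite !divr_gt0 ?powR_gt0 ?ltr0n ?ptil_normalizer_gt0.
Qed.

Lemma sum_pitem : \sum_j pitem R M C beta j = 1.
Proof.
rewrite -mulr_suml sum_divn_blocks // /ptil -mulr_suml.
by rewrite mulfV ?gt_eqF ?ptil_normalizer_gt0 // divff // pnatr_eq0 -lt0n.
Qed.

End ItemDistribution.

Section SignGDTrajectory.
Variables (R : realType) (M C : nat) (beta alpha eta : R) (E Et : 'M[R]_(M * C)).
Hypotheses (M_gt0 : (0 < M)%N) (C_gt0 : (0 < C)%N) (K_gt1 : (1 < M * C)%N).
Hypotheses (alpha01 : 0 < alpha < 1).
Hypotheses (oE : orthogonal_mx R (M * C) E) (oEt : orthogonal_mx R (M * C) Et).

Local Notation W t := (tra_signgd_iter R M C beta alpha eta E Et t).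
Local Notation s_opt := (opt_gap (M * C) alpha).

Lemma tra_signgd_iter_two_level t : exists y z,
  Et^T *m W t *m E = two_level_mx (M * C) y z /\
  y - z - s_opt = iter t (sign_step (2 * eta)) (- s_opt).
Proof.
elim: t => [|t [y [z [Vt dt]]]].
  exists 0, 0; split; last by rewrite subrr sub0r.
  by rewrite mulmx0 mul0mx; apply/matrixP => i j; rewrite !mxE if_same.
set sg := Num.sg (y - z - s_opt).
exists (y - eta * sg), (z + eta * sg); split.
  rewrite /tra_signgd_iter iterS tra_signgd_stepE // Vt.
  by rewrite sg_xent_grad_two_level // => [|j]; [exact: two_level_mx_step | exact: pitem_gt0].
by rewrite iterS -dt /sign_step -/sg; ring.
Qed.

Lemma loss_tra_signgd_gap T :
  loss_tra_signgd R M C beta alpha eta E Et T - loss_star R (M * C) alpha =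
  kl_gap (noise_diag (M * C) alpha) (iter T (sign_step (2 * eta)) (- s_opt)).
Proof.
have [y [z [VT dT]]] := tra_signgd_iter_two_level T.
by rewrite /loss_tra_signgd loss_xentE VT xent_two_level_gap ?sum_pitem // dT.
Qed.

End SignGDTrajectory.

Theorem theoremH2 (R : realType) (beta alpha : R) :
  1 < beta -> 0 < alpha < 1 ->
  (* eta = Theta(log K / T): a suitable range of constants *)
  exists b1 b2 : R, 0 < b1 /\ b1 <= b2 /\
  (* T ~ M^beta: arbitrary fixed constants a1 <= a2 *)
  forall a1 a2 : R, 0 < a1 -> a1 <= a2 ->
  exists (A : R) (N : nat), 0 < A /\
  forall (M C T : nat) (eta : R) (E Et : 'M[R]_(M * C)),
    (N <= M)%N ->            (* M = omega_K(1) *)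
    (N * M <= C)%N ->        (* M << C (hence K = M C >> 1) *)
    a1 * M%:R `^ beta <= T%:R <= a2 * M%:R `^ beta ->
    b1 * (ln (M * C)%:R / T%:R) <= eta <= b2 * (ln (M * C)%:R / T%:R) ->
    orthogonal_mx R (M * C) E -> orthogonal_mx R (M * C) Et ->
    loss_tra_signgd R M C beta alpha eta E Et T - loss_star R (M * C) alpha
      <= A * (ln (M * C)%:R / T%:R) ^+ 2.
Proof.
move=> _ alpha01; exists 1, 2; split; [lra | split; [lra |]].
move=> a1 a2 a1_gt0 _; have /andP[al0 _] := alpha01.
have alphaN : alpha^-1 < (Num.Def.archi_bound alpha^-1)%:R.
  by apply: archi_boundP; rewrite invr_ge0 ltW.
exists 32, (Num.Def.archi_bound alpha^-1).+2; split => // M C T eta E Et NM NMC.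
move=> /andP[T_ge _] /andP[eta_ge eta_le] oE oEt.
have [M0 C0 K1 NK] : [/\ (0 < M)%N, (0 < C)%N, (1 < M * C)%N
  & (Num.Def.archi_bound alpha^-1 <= M * C)%N] by split; nia.
have T0 : 0 < T%:R :> R by apply: lt_le_trans T_ge; rewrite mulr_gt0 ?powR_gt0 ?ltr0n.
have alphaK : 1 <= alpha * (M * C)%:R.
  rewrite -[X in X <= _](mulfV (lt0r_neq0 al0)) ler_pM2l //.
  by rewrite (le_trans (ltW alphaN)) ?ler_nat.
set L := ln (M * C)%:R / T%:R in eta_ge eta_le *.
have etaT : ln (M * C)%:R <= eta * T%:R by rewrite -ler_pdivrMr // -[_ / _]mul1r.
have L0 : 0 <= L by rewrite divr_ge0 ?ln_ge0 ?ler1n ?ltW //; lia.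
have gap_ge0 := opt_gap_ge0 K1 alpha01.
have gap_le := opt_gap_le_ln K1 alpha01 alphaK.
rewrite loss_tra_signgd_gap //.
apply: le_trans (kl_gap_le_of_abs (c := 4 * L) (noise_diag_bounds K1 alpha01) _) _.
  apply: le_trans (iter_sign_step_le _ _) _; rewrite ?normrN ?ger0_norm //; lra.
by rewrite !expr2; lra.
Qed.
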